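(* Suppose a three-link protocol given by maps $s_{AB},s_{AC},s_{BC}$ (and decision functions) solves MEQ-AD$(3,M)$. Then the map $x\mapsto (s_{AB}(x),s_{AC}(x))$ on $\{1,\dots,M\}$ is injective; equivalently, in the associated bipartite graph $G(U,V,E)$ each edge corresponds to exactly one input value. Hence $|E|=M$ and $|U|\cdot|V|\ge M$.
   Context: Three nodes $A,B,C$ hold inputs $x_A,x_B,x_C\in\{1,\dots,M\}$. A three-link protocol is given by maps $s_{AB},s_{AC},s_{BC}$ from $\{1,\dots,M\}$ to finite sets: $A$ sends $s_{AB}(x_A)$ to $B$ and $s_{AC}(x_A)$ to $C$, and $B$ sends $s_{BC}(x_B)$ to $C$ (private point-to-point links). Each node outputs a bit: $EQ_A$ is a function of $x_A$, $EQ_B$ a function of $(x_B,s_{AB}(x_A))$, and $EQ_C$ a function of $(x_C,s_{AC}(x_A),s_{BC}(x_B))$. The protocol solves MEQ-AD$(3,M)$ if for all inputs, $EQ_A=EQ_B=EQ_C=0$ holds iff $x_A=x_B=x_C$. Its complexity is $\log_2(|s_{AB}|\cdot|s_{AC}|\cdot|s_{BC}|)$, where $|s_{ij}|$ is the size of the range of $s_{ij}$. The associated simple bipartite graph $G(U,V,E)$ has vertex sets $U=\{U_i: i \text{ in the range of } s_{AB}\}$, $V=\{V_j: j\text{ in the range of } s_{AC}\}$, and an edge $(U_i,V_j)\in E$ iff $i=s_{AB}(x)$ and $j=s_{AC}(x)$ for some $x$; the edge $(U_{s_{AB}(x)},V_{s_{AC}(x)})$ is said to correspond to $x$. *)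

(* Inputs {1,...,M} are modelled by 'I_M = {0,...,M-1}. *)
From mathcomp Require Import all_boot.
Set Implicit Arguments. Unset Strict Implicit. Unset Printing Implicit Defensive.

Definition solves_MEQ_AD3 (M : nat) (TAB TAC TBC : finType)
  (sAB : 'I_M -> TAB) (sAC : 'I_M -> TAC) (sBC : 'I_M -> TBC)
  (EQA : 'I_M -> bool) (EQB : 'I_M -> TAB -> bool)
  (EQC : 'I_M -> TAC -> TBC -> bool) : Prop :=
  forall xA xB xC : 'I_M,
    [&& EQA xA == false, EQB xB (sAB xA) == false
      & EQC xC (sAC xA) (sBC xB) == false] <-> (xA = xB /\ xB = xC).

Definition Uset (M : nat) (TAB : finType) (sAB : 'I_M -> TAB) : {set TAB} :=
  [set sAB x | x : 'I_M].
Definition Vset (M : nat) (TAC : finType) (sAC : 'I_M -> TAC) : {set TAC} :=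
  [set sAC x | x : 'I_M].
Definition Eset (M : nat) (TAB TAC : finType) (sAB : 'I_M -> TAB)
  (sAC : 'I_M -> TAC) : {set TAB * TAC} :=
  [set (sAB x, sAC x) | x : 'I_M].

From mathcomp Require Import all_boot.

(** If x and y send the same messages to B and C, then in the run with
    inputs (y, x, x) every node sees exactly what it sees in an honest run:
    A holds y as in the run (y, y, y), while B and C receive the messages of
    x as in the run (x, x, x).  So all outputs are 0, forcing y = x. *)

Set Implicit Arguments.
Unset Strict Implicit.
Unset Printing Implicit Defensive.

Section Protocol.

Variables (M : nat) (TAB TAC TBC : finType).
Variables (sAB : 'I_M -> TAB) (sAC : 'I_M -> TAC) (sBC : 'I_M -> TBC).
Variables (EQA : 'I_M -> bool) (EQB : 'I_M -> TAB -> bool).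
Variable EQC : 'I_M -> TAC -> TBC -> bool.
Hypothesis solves : solves_MEQ_AD3 sAB sAC sBC EQA EQB EQC.

Lemma solves_MEQ_AD3_diag (x : 'I_M) :
  [/\ EQA x = false, EQB x (sAB x) = false & EQC x (sAC x) (sBC x) = false].
Proof.
by have /and3P[/eqP -> /eqP -> /eqP ->] := proj2 (solves x x x) (conj erefl erefl).
Qed.

Lemma solves_MEQ_AD3_messages_inj :
  injective (fun x : 'I_M => (sAB x, sAC x)).
Proof.
move=> y x [eAB eAC].
have [hAy _ _] := solves_MEQ_AD3_diag y.
have [_ hBx hCx] := solves_MEQ_AD3_diag x.
have [] := proj1 (solves y x x).
  by rewrite hAy eAB eAC hBx hCx.
by [].
Qed.

Lemma card_Eset_MEQ_AD3 : #|Eset sAB sAC| = M.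
Proof. by rewrite /Eset card_imset ?card_ord //; exact: solves_MEQ_AD3_messages_inj. Qed.

End Protocol.

Lemma Eset_subset_UV (M : nat) (TAB TAC : finType)
    (sAB : 'I_M -> TAB) (sAC : 'I_M -> TAC) :
  Eset sAB sAC \subset setX (Uset sAB) (Vset sAC).
Proof.
apply/subsetP=> _ /imsetP[x _ ->].
by rewrite in_setX !imset_f.
Qed.

Theorem lemma3 (M : nat) (TAB TAC TBC : finType)
  (sAB : 'I_M -> TAB) (sAC : 'I_M -> TAC) (sBC : 'I_M -> TBC)
  (EQA : 'I_M -> bool) (EQB : 'I_M -> TAB -> bool)
  (EQC : 'I_M -> TAC -> TBC -> bool) :
  solves_MEQ_AD3 sAB sAC sBC EQA EQB EQC ->
  injective (fun x : 'I_M => (sAB x, sAC x)) /\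
  #|Eset sAB sAC| = M /\
  M <= #|Uset sAB| * #|Vset sAC|.
Proof.
move=> solves.
have cardE := card_Eset_MEQ_AD3 solves.
split; first exact: solves_MEQ_AD3_messages_inj solves.
split=> //.
by rewrite -cardsX -{1}cardE subset_leq_card // Eset_subset_UV.
Qed.
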